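(* The following sets of functions $\mathbb{R}^+\to\mathbb{R}^+$ coincide: $\mathbf{Mon}(\mathbb{R}^+,d^+)=\mathbf{SI}=\mathbf{In}(\mathbf{P_U})=\mathbf{In}(\mathbf{P_{PU}})=\mathbf{Mon}(\mathbb{R}^+,\vee)$. In particular, $f$ is a monomorphism of the groupoid $(\mathbb{R}^+,d^+)$ if and only if $f$ is strictly increasing with $f(0)=0$.
   Context: $\mathbb{R}^+=[0,\infty)$. The map $d^+$ on $\mathbb{R}^+$ is defined by $d^+(p,q)=0$ if $p=q$ and $d^+(p,q)=\max\{p,q\}$ otherwise; $(\mathbb{R}^+,d^+)$ is a groupoid with identity $0$, and $(\mathbb{R}^+,\vee)$ with $x\vee y=\max\{x,y\}$ is a monoid with identity $0$. For a groupoid $(S,\ast)$ with identity $1_S$, an endomorphism is $\Phi:S\to S$ with $\Phi(x\ast y)=\Phi(x)\ast\Phi(y)$ for all $x,y$ and $\Phi(1_S)=1_S$; a monomorphism is an injective endomorphism; $\mathbf{Mon}(S,\ast)$ is the set of monomorphisms. A pseudoultrametric on a nonempty set $X$ is a symmetric $d:X\times X\to\mathbb{R}^+$ with $d(x,x)=0$ and $d(x,y)\le\max\{d(x,z),d(z,y)\}$; an ultrametric additionally satisfies $d(x,y)=0\iff x=y$. $f$ is pseudoultrametric-preserving (ultrametric-preserving) if $f\circ d$ is a pseudoultrametric (ultrametric) for every pseudoultrametric (ultrametric) $d$; $\mathbf{P_{PU}}$, $\mathbf{P_U}$ are these sets and $\mathbf{In}(\cdot)$ their injective elements. $\mathbf{SI}$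 is the set of strictly increasing $f$ with $f(0)=0$. *)

(* R^+ = [0,oo) is represented by the predicate (0 <= x); a function
   R^+ -> R^+ is an f : R -> R with f mapping nonnegatives to nonnegatives,
   and every property below only looks at f on nonnegative arguments. *)
From Stdlib Require Import Reals.
Open Scope R_scope.

Definition dplus (p q : R) : R :=
  if Req_EM_T p q then 0 else Rmax p q.

Definition vee (x y : R) : R := Rmax x y.

Definition endo_Rp (op : R -> R -> R) (f : R -> R) : Prop :=
  (forall x y, 0 <= x -> 0 <= y -> f (op x y) = op (f x) (f y)) /\ f 0 = 0.

Definition inj_Rp (f : R -> R) : Prop :=
  forall x y, 0 <= x -> 0 <= y -> f x = f y -> x = y.

Definition Mon_Rp (op : R -> R -> R) (f : R -> R) : Prop :=
  endo_Rp op f /\ inj_Rp f.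

Definition SI (f : R -> R) : Prop :=
  (forall x y, 0 <= x -> x < y -> f x < f y) /\ f 0 = 0.

Definition is_pseudoultrametric {X : Type} (d : X -> X -> R) : Prop :=
  (forall x y, 0 <= d x y) /\
  (forall x y, d x y = d y x) /\
  (forall x, d x x = 0) /\
  (forall x y z, d x y <= Rmax (d x z) (d z y)).

Definition is_ultrametric {X : Type} (d : X -> X -> R) : Prop :=
  is_pseudoultrametric d /\ (forall x y, d x y = 0 -> x = y).

Definition P_PU (f : R -> R) : Prop :=
  forall (X : Type) (d : X -> X -> R), inhabited X ->
    is_pseudoultrametric d -> is_pseudoultrametric (fun x y => f (d x y)).

Definition P_U (f : R -> R) : Prop :=
  forall (X : Type) (d : X -> X -> R), inhabited X ->
    is_ultrametric d -> is_ultrametric (fun x y => f (d x y)).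

Definition In_Rp (P : (R -> R) -> Prop) (f : R -> R) : Prop :=
  P f /\ inj_Rp f.

(* A strictly increasing f with
   f 0 = 0 is injective and commutes with max, hence preserves d^+, \/ and the strong
   triangle inequality.  Conversely, a morphism of d^+ or of \/ satisfies
   f y = max (f x) (f y) for x < y, and an (pseudo)ultrametric preserving f, applied to
   the isosceles triangle with base x and legs y, gives f x <= f y; in every case
   injectivity upgrades this to strict monotonicity. *)
From Stdlib Require Import Reals Lra.
Open Scope R_scope.

Lemma SI_le (f : R -> R) : SI f -> forall x y, 0 <= x -> x <= y -> f x <= f y.
Proof.
  intros [Hlt _] x y Hx Hxy.
  destruct (Rle_lt_or_eq_dec x y Hxy) as [Hxy' | ->].
  - left; exact (Hlt x y Hx Hxy').
  - right; reflexivity.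
Qed.

Lemma SI_inj (f : R -> R) : SI f -> inj_Rp f.
Proof.
  intros [Hlt _] x y Hx Hy Efxy.
  destruct (Rtotal_order x y) as [Hxy | [Hxy | Hxy]]; [| exact Hxy |].
  - specialize (Hlt x y Hx Hxy); lra.
  - specialize (Hlt y x Hy Hxy); lra.
Qed.

Lemma SI_Rmax (f : R -> R) : SI f ->
  forall x y, 0 <= x -> 0 <= y -> f (Rmax x y) = Rmax (f x) (f y).
Proof.
  intros HS x y Hx Hy.
  destruct (Rle_dec x y) as [Hxy | Hyx].
  - rewrite !Rmax_right; [reflexivity | apply SI_le | ]; auto.
  - assert (Hyx' : y <= x) by lra.
    rewrite !Rmax_left; [reflexivity | apply SI_le | ]; auto.
Qed.

Lemma SI_of_inj_le (f : R -> R) :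
  f 0 = 0 -> inj_Rp f -> (forall x y, 0 <= x -> x < y -> f x <= f y) -> SI f.
Proof.
  intros f0 Hinj Hle; split; [| exact f0].
  intros x y Hx Hxy.
  destruct (Rle_lt_or_eq_dec _ _ (Hle x y Hx Hxy)) as [Hlt | Heq]; [exact Hlt |].
  apply Hinj in Heq; lra.
Qed.

Lemma SI_of_inj_Rmax (f : R -> R) :
  f 0 = 0 -> inj_Rp f ->
  (forall x y, 0 <= x -> x < y -> f y = Rmax (f x) (f y)) -> SI f.
Proof.
  intros f0 Hinj Hmax; apply SI_of_inj_le; [exact f0 | exact Hinj |].
  intros x y Hx Hxy; rewrite (Hmax x y Hx Hxy); apply Rmax_l.
Qed.

Lemma dplus_diag (x : R) : dplus x x = 0.
Proof. unfold dplus; destruct (Req_EM_T x x); congruence. Qed.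

Lemma dplus_neq (x y : R) : x <> y -> dplus x y = Rmax x y.
Proof. unfold dplus; destruct (Req_EM_T x y); congruence. Qed.

Lemma Mon_dplus_SI (f : R -> R) : Mon_Rp dplus f -> SI f.
Proof.
  intros [[Hhom f0] Hinj]; apply SI_of_inj_Rmax; [exact f0 | exact Hinj |].
  intros x y Hx Hxy.
  assert (Hfxy : f x <> f y) by (intros E; apply Hinj in E; lra).
  rewrite <- (dplus_neq _ _ Hfxy), <- Hhom, dplus_neq, Rmax_right; lra.
Qed.

Lemma SI_Mon_dplus (f : R -> R) : SI f -> Mon_Rp dplus f.
Proof.
  intros HS; split; [split; [| apply HS] | exact (SI_inj f HS)].
  intros x y Hx Hy.
  destruct (Req_dec x y) as [<- | Hxy].
  - rewrite !dplus_diag; apply HS.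
  - assert (Hfxy : f x <> f y) by (intros E; exact (Hxy (SI_inj f HS x y Hx Hy E))).
    rewrite !dplus_neq by assumption; exact (SI_Rmax f HS x y Hx Hy).
Qed.

Lemma Mon_vee_SI (f : R -> R) : Mon_Rp vee f -> SI f.
Proof.
  intros [[Hhom f0] Hinj]; apply SI_of_inj_Rmax; [exact f0 | exact Hinj |].
  intros x y Hx Hxy.
  unfold vee in Hhom; rewrite <- Hhom, Rmax_right; lra.
Qed.

Lemma SI_Mon_vee (f : R -> R) : SI f -> Mon_Rp vee f.
Proof.
  intros HS; split; [split; [| apply HS] | exact (SI_inj f HS)].
  exact (SI_Rmax f HS).
Qed.

Lemma SI_P_PU (f : R -> R) : (forall x, 0 <= x -> 0 <= f x) -> SI f -> P_PU f.
Proof.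
  intros Hf HS X d _ [Hnn [Hsym [Hdiag Htri]]].
  split; [| split; [| split]].
  - intros x y; apply Hf, Hnn.
  - intros x y; rewrite Hsym; reflexivity.
  - intros x; rewrite Hdiag; apply HS.
  - intros x y z; rewrite <- SI_Rmax by auto; apply SI_le; auto.
Qed.

Lemma SI_P_U (f : R -> R) : (forall x, 0 <= x -> 0 <= f x) -> SI f -> P_U f.
Proof.
  intros Hf HS X d HX [Hpu Hsep]; split; [exact (SI_P_PU f Hf HS X d HX Hpu) |].
  intros x y Hfd; apply Hsep.
  destruct Hpu as [Hnn _].
  apply (SI_inj f HS); [apply Hnn | right; reflexivity |].
  rewrite Hfd; symmetry; apply HS.
Qed.

Inductive vertex := VA | VB | VC.

Definition isosceles (x y : R) (u v : vertex) : R :=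
  match u, v with
  | VA, VB | VB, VA => x
  | VA, VC | VC, VA | VB, VC | VC, VB => y
  | _, _ => 0
  end.

Lemma isosceles_pseudoultrametric (x y : R) :
  0 <= x -> x <= y -> is_pseudoultrametric (isosceles x y).
Proof.
  intros Hx Hxy; split; [| split; [| split]].
  - intros [] []; simpl; lra.
  - intros [] []; reflexivity.
  - intros []; reflexivity.
  - intros [] [] []; simpl; unfold Rmax; destruct Rle_dec; lra.
Qed.

Lemma isosceles_ultrametric (x y : R) :
  0 < x -> x <= y -> is_ultrametric (isosceles x y).
Proof.
  intros Hx Hxy; split; [apply isosceles_pseudoultrametric; lra |].
  intros [] []; simpl; intros; reflexivity || lra.
Qed.

Lemma isosceles_preserved_le (f : R -> R) (x y : R) :
  is_pseudoultrametric (fun u v => f (isosceles x y u v)) -> f x <= f y.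
Proof.
  intros [_ [_ [_ Htri]]].
  specialize (Htri VA VB VC); simpl in Htri.
  rewrite Rmax_left in Htri by lra; exact Htri.
Qed.

Lemma isosceles_preserved_f0 (f : R -> R) (x y : R) :
  is_pseudoultrametric (fun u v => f (isosceles x y u v)) -> f 0 = 0.
Proof. intros [_ [_ [Hdiag _]]]; exact (Hdiag VA). Qed.

Lemma P_PU_f0 (f : R -> R) : P_PU f -> f 0 = 0.
Proof.
  intros HPU; apply (isosceles_preserved_f0 f 0 0), HPU;
    [exact (inhabits VA) | apply isosceles_pseudoultrametric; lra].
Qed.

Lemma P_PU_le (f : R -> R) : P_PU f -> forall x y, 0 <= x -> x <= y -> f x <= f y.
Proof.
  intros HPU x y Hx Hxy; apply isosceles_preserved_le, HPU;
    [exact (inhabits VA) | exact (isosceles_pseudoultrametric x y Hx Hxy)].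
Qed.

Lemma P_U_f0 (f : R -> R) : P_U f -> f 0 = 0.
Proof.
  intros HU; apply (isosceles_preserved_f0 f 1 1), HU;
    [exact (inhabits VA) | apply isosceles_ultrametric; lra].
Qed.

(* Ultrametrics never realize the distance 0 between distinct points, so the case
   x = 0 needs the nonnegativity of f. *)
Lemma P_U_le (f : R -> R) : (forall x, 0 <= x -> 0 <= f x) -> P_U f ->
  forall x y, 0 <= x -> x <= y -> f x <= f y.
Proof.
  intros Hf HU x y Hx Hxy.
  destruct (Rle_lt_or_eq_dec 0 x Hx) as [Hx' | <-].
  - apply isosceles_preserved_le, HU;
      [exact (inhabits VA) | exact (isosceles_ultrametric x y Hx' Hxy)].
  - rewrite (P_U_f0 f HU); apply Hf; exact Hxy.
Qed.

Lemma In_P_PU_SI (f : R -> R) : In_Rp P_PU f -> SI f.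
Proof.
  intros [HPU Hinj]; apply SI_of_inj_le; [exact (P_PU_f0 f HPU) | exact Hinj |].
  intros x y Hx Hxy; apply (P_PU_le f HPU); lra.
Qed.

Lemma In_P_U_SI (f : R -> R) : (forall x, 0 <= x -> 0 <= f x) -> In_Rp P_U f -> SI f.
Proof.
  intros Hf [HU Hinj]; apply SI_of_inj_le; [exact (P_U_f0 f HU) | exact Hinj |].
  intros x y Hx Hxy; apply (P_U_le f Hf HU); lra.
Qed.

Theorem theorem3p9 (f : R -> R) (Hf : forall x, 0 <= x -> 0 <= f x) :
  (Mon_Rp dplus f <-> SI f) /\
  (SI f <-> In_Rp P_U f) /\
  (In_Rp P_U f <-> In_Rp P_PU f) /\
  (In_Rp P_PU f <-> Mon_Rp vee f).
Proof.
  assert (HU : SI f <-> In_Rp P_U f).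
  { split; [intros HS; split; [exact (SI_P_U f Hf HS) | exact (SI_inj f HS)] |].
    exact (In_P_U_SI f Hf). }
  assert (HPU : SI f <-> In_Rp P_PU f).
  { split; [intros HS; split; [exact (SI_P_PU f Hf HS) | exact (SI_inj f HS)] |].
    exact (In_P_PU_SI f). }
  assert (Hvee : SI f <-> Mon_Rp vee f) by
    (split; [exact (SI_Mon_vee f) | exact (Mon_vee_SI f)]).
  split; [split; [exact (Mon_dplus_SI f) | exact (SI_Mon_dplus f)] |].
  split; [exact HU |].
  split; [rewrite <- HU, <- HPU | rewrite <- HPU, <- Hvee]; reflexivity.
Qed.
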